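(* Let $G=(V,E)$ be a $(2,2)$-$C_i$-tight graph or a $(2,2)$-$C_s$-tight graph, with involution $v\mapsto v'$. Suppose $v\in V$ has degree 3 with $N(v)=\{x,y,z\}$ and $xy\notin E$. If no $2$-critical subset of $V\setminus\{v,v'\}$ contains both $x$ and $y$, then there is no $W\subseteq V\setminus\{v,v'\}$ with $x,x',y,y'\in W$ and $i_G(W)=2|W|-3$.
   Context: A $\mathbb{Z}_2$-symmetric graph is a finite simple graph $G=(V,E)$ with an automorphism $\theta$ satisfying $\theta^2=\mathrm{id}$; write $v'=\theta(v)$. A vertex is fixed if $v'=v$; an edge $uv$ is fixed if $\{u',v'\}=\{u,v\}$. $G$ is $(2,2)$-sparse if every subgraph $(V',E')$ with $V'\ne\emptyset$ has $|E'|\le 2|V'|-2$, and $(2,2)$-tight if also $|E|=2|V|-2$. $G$ is $(2,2)$-$C_i$-tight if it is $(2,2)$-tight and $\theta$ fixes no vertex and no edge; $(2,2)$-$C_s$-tight if it is $(2,2)$-tight and $\theta$ fixes no edge. For $X\subseteq V$, $i_G(X)$ is the number of edges of the induced subgraph $G[X]$; $X$ is $k$-critical if $i_G(X)=2|X|-k$. *)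

From mathcomp Require Import all_boot.
Set Implicit Arguments. Unset Strict Implicit. Unset Printing Implicit Defensive.

Definition simple_graph (T : finType) (E : {set {set T}}) : Prop :=
  forall e, e \in E -> #|e| = 2.

Definition is_edge (T : finType) (E : {set {set T}}) (u v : T) : bool :=
  [set u; v] \in E.

Definition nbhd (T : finType) (E : {set {set T}}) (v : T) : {set T} :=
  [set u | is_edge E u v].

Definition Z2_sym (T : finType) (E : {set {set T}}) (theta : T -> T) : Prop :=
  (forall v, theta (theta v) = v) /\
  (forall e : {set T}, (theta @: e \in E) = (e \in E)).

Definition fixed_vertex (T : finType) (theta : T -> T) (v : T) : bool := theta v == v.
Definition fixed_edge (T : finType) (theta : T -> T) (e : {set T}) : bool := theta @: e == e.

Definition sparse22 (T : finType) (E : {set {set T}}) : Prop :=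
  forall (V' : {set T}) (E' : {set {set T}}),
    V' != set0 -> E' \subset E -> (forall e, e \in E' -> e \subset V') ->
    #|E'| + 2 <= 2 * #|V'|.

Definition tight22 (T : finType) (E : {set {set T}}) : Prop :=
  sparse22 E /\ #|E| + 2 = 2 * #|T|.

Definition Ci_tight22 (T : finType) (E : {set {set T}}) (theta : T -> T) : Prop :=
  tight22 E /\ (forall v, ~~ fixed_vertex theta v) /\
  (forall e, e \in E -> ~~ fixed_edge theta e).

Definition Cs_tight22 (T : finType) (E : {set {set T}}) (theta : T -> T) : Prop :=
  tight22 E /\ (forall e, e \in E -> ~~ fixed_edge theta e).

Definition iG (T : finType) (E : {set {set T}}) (X : {set T}) : nat :=
  #|[set e in E | e \subset X]|.

(* X is k-critical: i_G(X) = 2|X| - k (integer arithmetic, stated without truncation). *)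
Definition critical (T : finType) (E : {set {set T}}) (k : nat) (X : {set T}) : Prop :=
  iG E X + k = 2 * #|X|.

(* W and its mirror image theta(W) are both 3-critical and both contain x and y.
   Supermodularity of i_G gives i(W u W') + i(W n W') >= 2|W u W'| + 2|W n W'| - 6,
   while (2,2)-sparsity and the absence of 2-critical sets through x and y bound
   each term by 2|.| - 3. Hence W u W' is 3-critical, so i_G(W u W') is odd; but
   W u W' is theta-invariant and theta fixes no edge, so its edges come in pairs. *)

From mathcomp Require Import all_boot.
From mathcomp Require Import zify.

Set Implicit Arguments. Unset Strict Implicit. Unset Printing Implicit Defensive.

Lemma invol_fixfree_card_even (K : finType) (S : {set K}) (f : K -> K) :
  involutive f -> {in S, forall e, f e \in S} -> {in S, forall e, f e != e} ->
  ~~ odd #|S|.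
Proof.
move=> fK fS fne; have finj : injective f := inv_inj fK.
(* Split S into the elements sent up, resp. down, in the enumeration order. *)
set A := [set e in S | (enum_rank e < enum_rank (f e))%N].
have S_AfA : S = A :|: f @: A.
  apply/setP=> e; rewrite in_setU; apply/idP/idP.
    move=> eS; have rank_neq : enum_rank e != enum_rank (f e).
      by apply: contra (fne e eS) => /eqP/enum_rank_inj <-.
    case: (ltngtP (enum_rank e) (enum_rank (f e))) => [lt_ef|lt_fe|/val_inj eq_ef].
    - by rewrite !inE eS lt_ef.
    - by apply/orP; right; apply/imsetP; exists (f e); rewrite ?fK // inE fS //= fK.
    - by rewrite eq_ef eqxx in rank_neq.
  by case/orP=> [/setIdP[]|/imsetP[a /setIdP[aS _] ->]] //; exact: fS.
have A_fA_disj : A :&: f @: A = set0.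
  apply/setP=> e; rewrite !inE; apply/negP=> /andP[/andP[_ lt1] /imsetP[a]].
  rewrite inE => /andP[_ lt2] efa; rewrite efa fK in lt1.
  by have := ltn_trans lt1 lt2; rewrite ltnn.
have := cardsUI A (f @: A).
by rewrite -S_AfA A_fA_disj cards0 addn0 card_imset // => ->; rewrite addnn odd_double.
Qed.

Lemma iG_supermodular (T : finType) (E : {set {set T}}) (A B : {set T}) :
  iG E A + iG E B <= iG E (A :|: B) + iG E (A :&: B).
Proof.
rewrite /iG -cardsUI; apply: leq_add; apply: subset_leq_card; apply/subsetP=> e;
  rewrite !inE.
- by case/orP=> /andP[-> eS] /=; apply: subset_trans eS _; rewrite ?subsetUl ?subsetUr.
- by case/andP=> /andP[-> eA] /andP[_ eB]; rewrite subsetI eA eB.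
Qed.

Lemma sparse22_iG (T : finType) (E : {set {set T}}) (X : {set T}) :
  sparse22 E -> X != set0 -> iG E X + 2 <= 2 * #|X|.
Proof.
move=> sp X0; apply: sp X0 _ _; first by apply/subsetP=> e; rewrite inE => /andP[].
by move=> e; rewrite inE => /andP[].
Qed.

Lemma critical3_setU (T : finType) (E : {set {set T}}) (W1 W2 : {set T}) :
  sparse22 E -> W1 :&: W2 != set0 -> critical E 3 W1 -> critical E 3 W2 ->
  ~ critical E 2 (W1 :|: W2) -> ~ critical E 2 (W1 :&: W2) ->
  critical E 3 (W1 :|: W2).
Proof.
rewrite /critical => sp I0 c1 c2 /eqP nU /eqP nI.
have U0 : W1 :|: W2 != set0.
  by apply: contraNneq I0 => U0; rewrite -subset0 -U0 subIset ?subsetUl.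
have := sparse22_iG sp U0; have := sparse22_iG sp I0.
have := iG_supermodular E W1 W2; have := cardsUI W1 W2.
lia.
Qed.

Lemma critical_odd (T : finType) (E : {set {set T}}) (k : nat) (X : {set T}) :
  critical E k X -> odd (iG E X) = odd k.
Proof.
by rewrite /critical => /(congr1 odd); rewrite oddD oddM andFb; case: (odd _) (odd k) => [] [].
Qed.

Section InvolutiveAutomorphism.
Variables (T : finType) (E : {set {set T}}) (theta : T -> T).
Hypothesis thetaK : involutive theta.
Hypothesis theta_edge : forall e : {set T}, (theta @: e \in E) = (e \in E).

Lemma imset_thetaK : involutive (fun X : {set T} => theta @: X).
Proof. by move=> X; rewrite -imset_comp (eq_imset _ thetaK) imset_id. Qed.

Lemma iG_imset_le (X : {set T}) : iG E X <= iG E (theta @: X).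
Proof.
rewrite /iG -(card_imset _ (inv_inj imset_thetaK)); apply: subset_leq_card.
apply/subsetP=> e /imsetP[a]; rewrite inE => /andP[aE aX] ->.
by rewrite inE theta_edge aE imsetS.
Qed.

Lemma iG_imset (X : {set T}) : iG E (theta @: X) = iG E X.
Proof.
apply/eqP; rewrite eqn_leq iG_imset_le andbT.
by have := iG_imset_le (theta @: X); rewrite imset_thetaK.
Qed.

Lemma iG_invariant_even (U : {set T}) :
  theta @: U = U -> (forall e, e \in E -> ~~ fixed_edge theta e) -> ~~ odd (iG E U).
Proof.
move=> thetaU nofix; apply: (invol_fixfree_card_even imset_thetaK).
- by move=> e; rewrite !inE => /andP[eE eU]; rewrite theta_edge eE -thetaU imsetS.
- by move=> e; rewrite inE => /andP[eE _]; exact: nofix.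
Qed.

Lemma imset_theta_subsetC (X : {set T}) (v : T) :
  X \subset ~: [set v; theta v] -> theta @: X \subset ~: [set v; theta v].
Proof.
move=> Xv; apply/subsetP=> _ /imsetP[b bX ->]; move: (subsetP Xv b bX).
rewrite !inE !negb_or => /andP[bv btv]; apply/andP; split.
  by apply: contra btv => /eqP <-; rewrite thetaK.
by apply: contra bv => /eqP/(inv_inj thetaK) ->.
Qed.

End InvolutiveAutomorphism.

Theorem lemma5p2 (T : finType) (E : {set {set T}}) (theta : T -> T)
  (v x y z : T) :
  simple_graph E -> Z2_sym E theta ->
  (Ci_tight22 E theta \/ Cs_tight22 E theta) ->
  #|nbhd E v| = 3 -> nbhd E v = [set x; y; z] ->
  ~~ is_edge E x y ->
  ~ (exists X : {set T}, X \subset ~: [set v; theta v] /\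
        x \in X /\ y \in X /\ critical E 2 X) ->
  ~ (exists W : {set T}, W \subset ~: [set v; theta v] /\
        x \in W /\ theta x \in W /\ y \in W /\ theta y \in W /\
        critical E 3 W).
Proof.
move=> _ [thetaK theta_edge] tight _ _ _ no2crit [W [Wv [xW [txW [yW [tyW cW]]]]]].
have [sp nofix] : sparse22 E /\ (forall e, e \in E -> ~~ fixed_edge theta e).
  by case: tight => [[[sp _] [_ nofix]]|[[sp _] nofix]].
set W' := theta @: W.
have W'v : W' \subset ~: [set v; theta v] by exact: imset_theta_subsetC.
have xW' : x \in W' by apply/imsetP; exists (theta x); rewrite ?thetaK.
have yW' : y \in W' by apply/imsetP; exists (theta y); rewrite ?thetaK.
have cW' : critical E 3 W'.
  by rewrite /critical iG_imset // card_imset //; exact: inv_inj.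
have not2crit (X : {set T}) : X \subset W :|: W' -> x \in X -> y \in X -> ~ critical E 2 X.
  move=> XU xX yX cX; apply: no2crit; exists X; split=> //.
  by apply: subset_trans XU _; rewrite subUset Wv W'v.
have cU : critical E 3 (W :|: W').
  apply: critical3_setU => //; first by apply/set0Pn; exists x; rewrite inE xW.
  - by apply: not2crit; rewrite ?inE ?xW ?yW.
  - by apply: not2crit; rewrite ?subIset ?subsetUl ?inE ?xW ?xW' ?yW ?yW'.
have thetaU : theta @: (W :|: W') = W :|: W'.
  by rewrite imsetU imset_thetaK // setUC.
by have := iG_invariant_even thetaK theta_edge thetaU nofix; rewrite (critical_odd cU).
Qed.
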